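(* Let $\mathbb X$ and $\mathbb Y$ be $L$-structures with $|X|=|Y|=\kappa\ge\omega$. Then: (I) The following are equivalent: (a) $\mathbb X\preccurlyeq_c\mathbb Y$; (b) there exists a $\kappa$-closed back and forth system $\Pi\subseteq\mathrm{PC}(\mathbb X,\mathbb Y)$; (c) player II has a winning strategy in the game $G^{\preccurlyeq_c}_\kappa(\mathbb X,\mathbb Y)$. (II) The following are equivalent: (a) $\mathbb X\sim_c\mathbb Y$; (b) there are $\kappa$-closed back and forth systems $\Pi_{\mathbb X,\mathbb Y}\subseteq\mathrm{PC}(\mathbb X,\mathbb Y)$ and $\Pi_{\mathbb Y,\mathbb X}\subseteq\mathrm{PC}(\mathbb Y,\mathbb X)$; (c) player II has winning strategies in both games $G^{\preccurlyeq_c}_\kappa(\mathbb X,\mathbb Y)$ and $G^{\preccurlyeq_c}_\kappa(\mathbb Y,\mathbb X)$.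
   Context: $L=\langle R_i:i\in I\rangle$ is a relational language, $R_i$ of arity $n_i$; for an $L$-structure $\mathbb X$ with domain $X$, $R_i^{\mathbb X}$ is the interpretation of $R_i$. For a map $f$ and tuple $\bar x=\langle x_0,\dots,x_{k-1}\rangle$ write $f\bar x=\langle f(x_0),\dots,f(x_{k-1})\rangle$. A partial condensation from $\mathbb X$ to $\mathbb Y$ is a bijection $f$ from a set $\operatorname{dom}f\subseteq X$ onto a set $\operatorname{ran}f\subseteq Y$ such that for all $i\in I$ and $\bar x\in(\operatorname{dom}f)^{n_i}$, $\bar x\in R_i^{\mathbb X}$ implies $f\bar x\in R_i^{\mathbb Y}$; $\mathrm{PC}(\mathbb X,\mathbb Y)$ is the set of these. A condensation is a partial condensation with domain $X$ and range $Y$ (a bijective homomorphism). $\mathbb X\preccurlyeq_c\mathbb Y$ means there is a condensation from $\mathbb X$ onto $\mathbb Y$; $\mathbb X\sim_c\mathbb Y$ means $\mathbb X\preccurlyeq_c\mathbb Y$ and $\mathbb Y\preccurlyeq_c\mathbb X$. A back and forth system (b.f.s.) is a nonempty $\Pi\subseteq\mathrm{PC}(\mathbb X,\mathbb Y)$ such that (e1) for all $f\in\Pi$ and $x\in X$ there is $g\in\Pi$ with $f\subseteq g$ and $x\in\operatorname{dom}g$, and (e2) for all $f\in\Pi$ and $y\in Y$ there is $g\in\Pi$ with $f\subseteq g$ and $y\in\operatorname{ran}g$. A partial order $\langle P,\le\rangle$ is $\kappa$-closed if for every ordinal $\gamma<\kappa$ and every sequence $\langle p_\alpha:\alpha<\gamma\rangle$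 in $P$ with $p_\beta\le p_\alpha$ whenever $\alpha<\beta<\gamma$, there is $p\in P$ with $p\le p_\alpha$ for all $\alpha<\gamma$. A b.f.s. $\Pi$ is $\kappa$-closed if $\langle\Pi,\supseteq\rangle$ is $\kappa$-closed. For a cardinal $\kappa$, the game $G^{\preccurlyeq_c}_\kappa(\mathbb X,\mathbb Y)$ has steps indexed by $\alpha<\kappa$; at step $\alpha$ player I either chooses $x_\alpha\in X$ and then player II chooses $y_\alpha\in Y$, or player I chooses $y_\alpha\in Y$ and then II chooses $x_\alpha\in X$. Player II wins the play iff $\{\langle x_\alpha,y_\alpha\rangle:\alpha<\kappa\}\in\mathrm{PC}(\mathbb X,\mathbb Y)$; otherwise I wins. A strategy for II determines its move from the sequence of previous moves and I's current choice; it is winning if II wins every play in which it is followed. *)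

From Stdlib Require Import Classical.
From Stdlib Require Vectors.Fin.

Set Implicit Arguments.

(* A relational language L = <R_i : i in I>, R_i of arity ar i.  An
   L-structure with domain X is given by the interpretations
   RX i : (Fin.t (ar i) -> X) -> Prop  (tuples of length ar i). *)
Definition structure_rel (I : Type) (ar : I -> nat) (X : Type) : Type :=
  forall i : I, (Fin.t (ar i) -> X) -> Prop.

(* A partial map is represented by its graph, a relation X -> Y -> Prop. *)
Definition sub_rel (X Y : Type) (f g : X -> Y -> Prop) : Prop :=
  forall x y, f x y -> g x y.

Definition is_PC (I : Type) (ar : I -> nat) (X Y : Type)
  (RX : structure_rel ar X) (RY : structure_rel ar Y) (f : X -> Y -> Prop) : Prop :=
  (forall x y y', f x y -> f x y' -> y = y') /\
  (forall x x' y, f x y -> f x' y -> x = x') /\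
  (forall (i : I) (xs : Fin.t (ar i) -> X) (ys : Fin.t (ar i) -> Y),
      (forall k, f (xs k) (ys k)) -> RX i xs -> RY i ys).

Definition is_condensation (I : Type) (ar : I -> nat) (X Y : Type)
  (RX : structure_rel ar X) (RY : structure_rel ar Y) (f : X -> Y -> Prop) : Prop :=
  is_PC RX RY f /\ (forall x, exists y, f x y) /\ (forall y, exists x, f x y).

Definition condenses (I : Type) (ar : I -> nat) (X Y : Type)
  (RX : structure_rel ar X) (RY : structure_rel ar Y) : Prop :=
  exists f, is_condensation RX RY f.

Definition cond_equiv (I : Type) (ar : I -> nat) (X Y : Type)
  (RX : structure_rel ar X) (RY : structure_rel ar Y) : Prop :=
  condenses RX RY /\ condenses RY RX.

Definition is_bfs (I : Type) (ar : I -> nat) (X Y : Type)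
  (RX : structure_rel ar X) (RY : structure_rel ar Y)
  (Pi : (X -> Y -> Prop) -> Prop) : Prop :=
  (exists f, Pi f) /\
  (forall f, Pi f -> is_PC RX RY f) /\
  (forall f x, Pi f -> exists g, Pi g /\ sub_rel f g /\ exists y, g x y) /\
  (forall f y, Pi f -> exists g, Pi g /\ sub_rel f g /\ exists x, g x y).

(* The cardinal kappa is represented by a type K with a strict well-order lt
   of order type kappa (an initial ordinal): every proper initial segment has
   strictly smaller cardinality.  kappa >= omega: K is infinite. *)
Definition is_infinite_cardinal (K : Type) (lt : K -> K -> Prop) : Prop :=
  (forall a, ~ lt a a) /\
  (forall a b c, lt a b -> lt b c -> lt a c) /\
  (forall a b, lt a b \/ a = b \/ lt b a) /\
  well_founded lt /\
  (exists e : nat -> K, forall m n, e m = e n -> m = n) /\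
  (forall g : K, ~ exists h : K -> {b : K | lt b g},
       forall a a', h a = h a' -> a = a').

Definition equinumerous (A B : Type) : Prop :=
  exists f : A -> B, (forall a a', f a = f a' -> a = a') /\ (forall b, exists a, f a = b).

(* kappa-closedness of <Pi, ⊇>: ordinals gamma < kappa are the initial
   segments {a | lt a g} of K; p_beta <= p_alpha in <Pi, ⊇> means
   p_alpha ⊆ p_beta. *)
Definition kappa_closed (K : Type) (lt : K -> K -> Prop) (X Y : Type)
  (Pi : (X -> Y -> Prop) -> Prop) : Prop :=
  forall (g : K) (p : K -> X -> Y -> Prop),
    (forall a, lt a g -> Pi (p a)) ->
    (forall a b, lt a b -> lt b g -> sub_rel (p a) (p b)) ->
    exists q, Pi q /\ forall a, lt a g -> sub_rel (p a) q.

(* A play is a sequence indexed by K whose entry at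
   step a is (x_a, y_a, b) where b = true iff player I chose x_a (and II
   answered y_a), b = false iff I chose y_a (and II answered x_a). *)
Definition restrict (K A : Type) (lt : K -> K -> Prop) (p : K -> A) (a : K)
  : {b : K | lt b a} -> A := fun b => p (proj1_sig b).

(* A strategy for II is a pair (sX, sY): at step a, given the previous moves
   (the play restricted to steps < a) and I's current choice, it gives II's move. *)
Definition follows (K : Type) (lt : K -> K -> Prop) (X Y : Type)
  (sX : forall a : K, ({b : K | lt b a} -> X * Y * bool) -> X -> Y)
  (sY : forall a : K, ({b : K | lt b a} -> X * Y * bool) -> Y -> X)
  (p : K -> X * Y * bool) : Prop :=
  forall a : K,
    match p a with
    | (x, y, true) => y = sX a (restrict lt p a) x
    | (x, y, false) => x = sY a (restrict lt p a) y
    end.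

Definition play_rel (K X Y : Type) (p : K -> X * Y * bool) : X -> Y -> Prop :=
  fun x y => exists a, fst (fst (p a)) = x /\ snd (fst (p a)) = y.

Definition II_has_winning_strategy (K : Type) (lt : K -> K -> Prop)
  (I : Type) (ar : I -> nat) (X Y : Type)
  (RX : structure_rel ar X) (RY : structure_rel ar Y) : Prop :=
  exists (sX : forall a : K, ({b : K | lt b a} -> X * Y * bool) -> X -> Y)
         (sY : forall a : K, ({b : K | lt b a} -> X * Y * bool) -> Y -> X),
    forall p : K -> X * Y * bool, follows lt sX sY p -> is_PC RX RY (play_rel p).

(* A condensation f yields the one-point back and forth system {f}, which is
   trivially kappa-closed, and the strategy "answer along f or its inverse".
   Conversely, enumerate X and Y in order type kappa.  From a kappa-closed system,
   transfinite recursion gives an increasing kappa-chain in it whose a-th member has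
   the a-th point of X in its domain and the a-th point of Y in its range; as the chain
   is linear, its union is a condensation.  Against a winning strategy of II, let I
   play the points of X and Y along a surjection kappa -> X + Y, which exists because
   kappa + kappa = kappa; the play is then a total and onto partial condensation.
   Part (II) is part (I) in both directions. *)

From Stdlib Require Import Classical ClassicalEpsilon FunctionalExtensionality Arith Lia.
From Stdlib Require Import FinFun.
From Stdlib Require Vectors.Fin.

Set Implicit Arguments.

Lemma wf_minimal (K : Type) (lt : K -> K -> Prop) (P : K -> Prop) :
  well_founded lt -> (exists a, P a) -> exists a, P a /\ forall b, lt b a -> ~ P b.
Proof.
  intros wf [a Ha]. apply NNPP. intro Hnone.
  assert (Hall : forall b, ~ P b).
  { intro b. induction (wf b) as [b _ IH]. intro Hb. apply Hnone. eauto. }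
  exact (Hall a Ha).
Qed.

Lemma Fix_unfold (A : Type) (R : A -> A -> Prop) (Rwf : well_founded R) (P : A -> Type)
  (F : forall x, (forall y, R y x -> P y) -> P x) (x : A) :
  Fix Rwf P F x = F x (fun y _ => Fix Rwf P F y).
Proof.
  apply Fix_eq. intros z f g Hfg.
  replace g with f; [reflexivity|].
  apply functional_extensionality_dep; intro y.
  apply functional_extensionality_dep; intro Hy. apply Hfg.
Qed.

Lemma injective_nat_avoiding (A : Type) (e : nat -> A) (a : A) :
  Injective e -> exists u : nat -> A, Injective u /\ forall n, u n <> a.
Proof.
  intro einj. destruct (classic (exists m, e m = a)) as [[m Hm]|Hnot].
  - exists (fun n => e (n + S m)). split.
    + intros n n' h. apply einj in h. lia.
    + intros n h. rewrite <- Hm in h. apply einj in h. lia.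
  - exists e. split; [exact einj|]. intros n h. apply Hnot. eauto.
Qed.

(* Move [a] to [u 0] and each [u n] to [u (S n)]. *)
Lemma hilbert_hotel (A : Type) (u : nat -> A) (a : A) :
  Injective u -> (forall n, u n <> a) -> exists h : A -> A, Injective h /\ forall b, h b <> a.
Proof.
  intros uinj ua.
  set (index := fun b => epsilon (inhabits 0) (fun n => u n = b)).
  assert (Hindex : forall b, (exists n, u n = b) -> u (index b) = b)
    by (intros b hb; exact (epsilon_spec (inhabits 0) (fun n => u n = b) hb)).
  exists (fun b => if excluded_middle_informative (exists n, u n = b) then u (S (index b))
           else if excluded_middle_informative (b = a) then u 0 else b).
  split.
  - intros b b'.
    destruct (excluded_middle_informative (exists n, u n = b)) as [hb|hb];
    destruct (excluded_middle_informative (exists n, u n = b')) as [hb'|hb'];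
    [| destruct (excluded_middle_informative (b' = a)) as [ha'|ha']
     | destruct (excluded_middle_informative (b = a)) as [ha|ha]
     | destruct (excluded_middle_informative (b = a)) as [ha|ha];
       destruct (excluded_middle_informative (b' = a)) as [ha'|ha']];
    intro h; try (apply uinj in h; discriminate); try congruence.
    + apply uinj in h. injection h as h. rewrite <- (Hindex b hb), <- (Hindex b' hb'), h.
      reflexivity.
    + exfalso. apply hb'. eauto.
    + exfalso. apply hb. eauto.
    + exfalso. apply hb'. eauto.
    + exfalso. apply hb. eauto.
  - intro b. destruct (excluded_middle_informative _); [apply ua|].
    destruct (excluded_middle_informative _); [apply ua|assumption].
Qed.

Section InitialOrdinal.

Variables (K : Type) (lt : K -> K -> Prop).
Hypothesis HK : is_infinite_cardinal lt.

Let lt_total : forall a b, lt a b \/ a = b \/ lt b a := proj1 (proj2 (proj2 HK)).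
Let lt_wf : well_founded lt := proj1 (proj2 (proj2 (proj2 HK))).

(* A greatest [a] would make [K] the initial segment below [a] plus one point,
   which the Hilbert hotel squeezes back into that segment. *)
Lemma no_greatest (a : K) : exists b, lt a b.
Proof.
  pose proof HK as (_ & _ & _ & _ & [e einj] & segment_small).
  apply NNPP. intro Hmax.
  assert (Hbelow : forall b, b <> a -> lt b a).
  { intros b hb. destruct (lt_total b a) as [h|[h|h]]; [exact h|contradiction|].
    exfalso. eauto. }
  destruct (injective_nat_avoiding a einj) as [u [uinj ua]].
  destruct (hilbert_hotel uinj ua) as [h [hinj ha]].
  apply (segment_small a).
  exists (fun b => exist _ (h b) (Hbelow _ (ha b))).
  intros b b' E. apply hinj. exact (f_equal (@proj1_sig _ _) E).
Qed.

Definition succ (a : K) : K :=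
  epsilon (inhabits a) (fun b => lt a b /\ forall c, lt c b -> ~ lt a c).

Lemma succ_spec (a : K) : lt a (succ a) /\ forall c, lt c (succ a) -> ~ lt a c.
Proof.
  unfold succ. apply epsilon_spec.
  destruct (wf_minimal (fun b => lt a b) lt_wf (no_greatest a)) as [b Hb]. eauto.
Qed.

Lemma succ_inj : Injective succ.
Proof.
  intros a b E. destruct (succ_spec a) as [Ha1 Ha2]. destruct (succ_spec b) as [Hb1 Hb2].
  destruct (lt_total a b) as [h|[h|h]]; [exfalso|exact h|exfalso].
  - rewrite <- E in Hb1. exact (Ha2 b Hb1 h).
  - rewrite E in Ha1. exact (Hb2 a Ha1 h).
Qed.

Definition is_limit (l : K) : Prop := forall a, succ a <> l.

Lemma limit_plus_nat (c : K) : exists l n, is_limit l /\ c = Nat.iter n succ l.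
Proof.
  induction (lt_wf c) as [c _ IH].
  destruct (classic (exists a, succ a = c)) as [[a <-]|Hlim].
  - destruct (IH a (proj1 (succ_spec a))) as [l [n [Hl ->]]].
    exists l, (S n). auto.
  - exists c, 0. split; [|reflexivity]. intros a Ha. apply Hlim. eauto.
Qed.

Lemma limit_plus_nat_unique (l l' : K) (n n' : nat) :
  is_limit l -> is_limit l' -> Nat.iter n succ l = Nat.iter n' succ l' -> n = n' /\ l = l'.
Proof.
  intros Hl Hl'. revert n'. induction n as [|n IH]; intros [|n'] E; simpl in E.
  - auto.
  - exfalso. exact (Hl _ (eq_sym E)).
  - exfalso. exact (Hl' _ E).
  - apply succ_inj in E. destruct (IH n' E). auto.
Qed.

(* kappa + kappa = kappa: send [l + n] to the left copy of [l + n/2] for even [n]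
   and to the right copy for odd [n]. *)
Lemma surjection_onto_sum : exists s : K -> K + K, Surjective s.
Proof.
  set (halve := fun (c : K) (z : K + K) => exists l n, is_limit l /\ c = Nat.iter n succ l /\
         z = (if Nat.even n then inl else inr) (Nat.iter (Nat.div2 n) succ l)).
  destruct (choice halve) as [s Hs].
  { intro c. destruct (limit_plus_nat c) as [l [n [Hl Hc]]]. unfold halve. eauto 6. }
  assert (Hsplit : forall l n, is_limit l ->
            s (Nat.iter n succ l) = (if Nat.even n then inl else inr) (Nat.iter (Nat.div2 n) succ l)).
  { intros l n Hl. destruct (Hs (Nat.iter n succ l)) as [l' [n' [Hl' [E ->]]]].
    destruct (limit_plus_nat_unique _ _ Hl Hl' E) as [-> ->]. reflexivity. }
  exists s. intros [t|t]; destruct (limit_plus_nat t) as [l [k [Hl ->]]].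
  - exists (Nat.iter (2 * k) succ l). rewrite (Hsplit _ _ Hl), Nat.even_even, Nat.div2_double.
    reflexivity.
  - exists (Nat.iter (2 * k + 1) succ l). rewrite (Hsplit _ _ Hl), Nat.even_odd, Nat.div2_odd'.
    reflexivity.
Qed.

End InitialOrdinal.

Lemma Fin_common_upper_bound (K : Type) (lt : K -> K -> Prop) (k0 : K) :
  (forall a b, lt a b \/ a = b \/ lt b a) ->
  forall n (Q : Fin.t n -> K -> Prop),
  (forall k a b, Q k a -> lt a b -> Q k b) ->
  (forall k, exists a, Q k a) -> exists b, forall k, Q k b.
Proof.
  intro lt_total. induction n as [|n IH]; intros Q Qup HQ.
  - exists k0. intro k. exact (Fin.case0 (fun k => Q k k0) k).
  - destruct (IH (fun k => Q (Fin.FS k))) as [b Hb]; [intros k; apply Qup|intro k; apply HQ|].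
    destruct (HQ Fin.F1) as [a Ha].
    destruct (lt_total a b) as [h|[<-|h]];
      [exists b|exists a|exists a]; intro k; apply (Fin.caseS' k); eauto.
Qed.

Lemma sub_rel_trans (X Y : Type) (f g h : X -> Y -> Prop) :
  sub_rel f g -> sub_rel g h -> sub_rel f h.
Proof. intros Hfg Hgh x y H. auto. Qed.

Lemma surjection_of_equinumerous (A K : Type) :
  equinumerous A K -> exists g : K -> A, Surjective g.
Proof.
  intros [f [finj fsurj]]. destruct (choice _ fsurj) as [g Hg].
  exists g. intro x. exists (f x). apply finj, Hg.
Qed.

Section Condensations.

Variables (I : Type) (ar : I -> nat) (X Y : Type).
Variables (RX : structure_rel ar X) (RY : structure_rel ar Y).

Lemma is_PC_sub_rel (f g : X -> Y -> Prop) :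
  is_PC RX RY f -> sub_rel g f -> is_PC RX RY g.
Proof.
  intros (Hfun & Hinj & Hhom) Hgf. split; [|split].
  - intros x y y' H H'. eauto.
  - intros x x' y H H'. eauto.
  - intros i xs ys H. apply Hhom. intro k. apply Hgf, H.
Qed.

Lemma union_chain_is_PC (K : Type) (lt : K -> K -> Prop) (k0 : K) (P : K -> X -> Y -> Prop) :
  (forall a b, lt a b \/ a = b \/ lt b a) ->
  (forall a, is_PC RX RY (P a)) -> (forall a b, lt a b -> sub_rel (P a) (P b)) ->
  is_PC RX RY (fun x y => exists a, P a x y).
Proof.
  intros lt_total HPC Hmono.
  assert (Hjoin : forall a b, exists c, sub_rel (P a) (P c) /\ sub_rel (P b) (P c)).
  { intros a b. destruct (lt_total a b) as [h|[<-|h]];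
      [exists b|exists a|exists a]; split; auto; intros ? ? H; exact H. }
  split; [|split].
  - intros x y y' [a Ha] [b Hb]. destruct (Hjoin a b) as [c [Hac Hbc]].
    exact (proj1 (HPC c) x y y' (Hac _ _ Ha) (Hbc _ _ Hb)).
  - intros x x' y [a Ha] [b Hb]. destruct (Hjoin a b) as [c [Hac Hbc]].
    exact (proj1 (proj2 (HPC c)) x x' y (Hac _ _ Ha) (Hbc _ _ Hb)).
  - intros i xs ys Hk. destruct (Fin_common_upper_bound lt k0 lt_total
                                    (fun k a => P a (xs k) (ys k))) as [b Hb].
    + intros k a b Ha Hab. exact (Hmono a b Hab _ _ Ha).
    + exact Hk.
    + exact (proj2 (proj2 (HPC b)) i xs ys Hb).
Qed.

Section GameLength.

Variables (K : Type) (lt : K -> K -> Prop).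

Lemma condenses_closed_bfs :
  condenses RX RY -> exists Pi, is_bfs RX RY Pi /\ kappa_closed lt Pi.
Proof.
  intros [f (HPC & Htot & Hsurj)]. exists (fun g => g = f).
  assert (Hrefl : sub_rel f f) by (intros x y H; exact H).
  split; [split; [|split; [|split]]|].
  - eauto.
  - intros g ->. exact HPC.
  - intros g x ->. eauto.
  - intros g y ->. eauto.
  - intros g p Hp _. exists f. split; [reflexivity|]. intros a Ha. rewrite (Hp a Ha). exact Hrefl.
Qed.

Lemma condenses_winning : condenses RX RY -> II_has_winning_strategy lt RX RY.
Proof.
  intros [f (HPC & Htot & Hsurj)].
  destruct (choice _ Htot) as [fX HfX]. destruct (choice _ Hsurj) as [fY HfY].
  exists (fun _ _ x => fX x), (fun _ _ y => fY y).
  intros p Hfollow. apply (is_PC_sub_rel HPC). intros x y [a [<- <-]].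
  specialize (Hfollow a). destruct (p a) as [[x' y'] [|]]; simpl; subst; auto.
Qed.

Hypothesis lt_wf : well_founded lt.

Lemma play_against_schedule (sched : K -> X + Y)
  (sX : forall a : K, ({b : K | lt b a} -> X * Y * bool) -> X -> Y)
  (sY : forall a : K, ({b : K | lt b a} -> X * Y * bool) -> Y -> X) :
  exists p, follows lt sX sY p /\
    forall a, match sched a with
              | inl x => fst (fst (p a)) = x
              | inr y => snd (fst (p a)) = y
              end.
Proof.
  set (move := fun a (history : forall b, lt b a -> X * Y * bool) =>
    let h := fun b : {b : K | lt b a} => history (proj1_sig b) (proj2_sig b) in
    match sched a with
    | inl x => (x, sX a h x, true)
    | inr y => (sY a h y, y, false)
    end).
  set (p := Fix lt_wf (fun _ => (X * Y * bool)%type) move).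
  assert (Hp : forall a, p a = move a (fun b _ => p b)) by (intro a; exact (Fix_unfold lt_wf _ move a)).
  exists p. split; intro a; rewrite (Hp a); unfold move; destruct (sched a); reflexivity.
Qed.

Lemma winning_condenses (sched : K -> X + Y) :
  Surjective sched -> II_has_winning_strategy lt RX RY -> condenses RX RY.
Proof.
  intros Hsched [sX [sY Hwin]].
  destruct (play_against_schedule sched sX sY) as [p [Hfollow Hplay]].
  exists (play_rel p). split; [exact (Hwin p Hfollow)|split].
  - intro x. destruct (Hsched (inl x)) as [a Ha]. specialize (Hplay a). rewrite Ha in Hplay.
    exists (snd (fst (p a))), a. auto.
  - intro y. destruct (Hsched (inr y)) as [a Ha]. specialize (Hplay a). rewrite Ha in Hplay.
    exists (fst (fst (p a))), a. auto.
Qed.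

Variable Pi : (X -> Y -> Prop) -> Prop.
Hypotheses (Pi_bfs : is_bfs RX RY Pi) (Pi_closed : kappa_closed lt Pi).

Lemma bfs_extend_both (f : X -> Y -> Prop) (x : X) (y : Y) :
  Pi f -> exists g, Pi g /\ sub_rel f g /\ (exists y', g x y') /\ (exists x', g x' y).
Proof.
  destruct Pi_bfs as (_ & _ & forth & back). intro Hf.
  destruct (forth f x Hf) as [g [Hg [Hfg Hx]]].
  destruct (back g y Hg) as [h [Hh [Hgh Hy]]].
  exists h. split; [exact Hh|split; [exact (sub_rel_trans Hfg Hgh)|split; [|exact Hy]]].
  destruct Hx as [y' Hy']. exists y'. apply Hgh, Hy'.
Qed.

(* Transfinite recursion along [lt]: at stage [a], kappa-closedness bounds the
   earlier stages, then the bfs puts [gX a] into the domain and [gY a] into the range. *)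
Lemma closed_bfs_exhausting_chain (gX : K -> X) (gY : K -> Y) :
  exists P : K -> X -> Y -> Prop, forall a,
    Pi (P a) /\ (forall b, lt b a -> sub_rel (P b) (P a)) /\
    (exists y, P a (gX a) y) /\ (exists x, P a x (gY a)).
Proof.
  set (inh := inhabits (fun (_ : X) (_ : Y) => False)).
  set (stage := fun a (earlier : forall b, lt b a -> X -> Y -> Prop) =>
    epsilon inh (fun q => Pi q /\ (forall b Hb, sub_rel (earlier b Hb) q) /\
                          (exists y, q (gX a) y) /\ (exists x, q x (gY a)))).
  set (P := Fix lt_wf (fun _ => X -> Y -> Prop) stage).
  exists P. intro a. induction (lt_wf a) as [a _ IH].
  assert (HP : P a = stage a (fun b _ => P b)) by exact (Fix_unfold lt_wf _ stage a).
  rewrite HP. unfold stage.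
  apply (epsilon_spec inh (fun q => Pi q /\ (forall b (Hb : lt b a), sub_rel (P b) q) /\
                          (exists y, q (gX a) y) /\ (exists x, q x (gY a)))).
  destruct (@Pi_closed a P) as [q [Hq Hbound]].
  - intros b Hb. apply (IH b Hb).
  - intros b c Hbc Hc. apply (IH c Hc), Hbc.
  - destruct (bfs_extend_both (gX a) (gY a) Hq) as [g [Hg [Hqg Hxy]]].
    exists g. split; [exact Hg|split; [|exact Hxy]].
    intros b Hb. exact (sub_rel_trans (Hbound b Hb) Hqg).
Qed.

Lemma closed_bfs_condenses (k0 : K) (gX : K -> X) (gY : K -> Y) :
  (forall a b, lt a b \/ a = b \/ lt b a) -> Surjective gX -> Surjective gY ->
  condenses RX RY.
Proof.
  intros lt_total HgX HgY.
  destruct (closed_bfs_exhausting_chain gX gY) as [P HP].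
  exists (fun x y => exists a, P a x y). split; [|split].
  - apply (union_chain_is_PC lt k0 P lt_total).
    + intro a. exact (proj1 (proj2 Pi_bfs) _ (proj1 (HP a))).
    + intros a b Hab. exact (proj1 (proj2 (HP b)) a Hab).
  - intro x. destruct (HgX x) as [a <-]. destruct (HP a) as (_ & _ & [y Hy] & _). eauto.
  - intro y. destruct (HgY y) as [a <-]. destruct (HP a) as (_ & _ & _ & [x Hx]). eauto.
Qed.

End GameLength.

Lemma condenses_iff_closed_bfs_iff_winning (K : Type) (lt : K -> K -> Prop) :
  is_infinite_cardinal lt -> equinumerous X K -> equinumerous Y K ->
  (condenses RX RY <-> exists Pi, is_bfs RX RY Pi /\ kappa_closed lt Pi) /\
  ((exists Pi, is_bfs RX RY Pi /\ kappa_closed lt Pi) <-> II_has_winning_strategy lt RX RY).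
Proof.
  intros HK HX HY.
  destruct (surjection_onto_sum HK) as [s Hs].
  pose proof HK as (_ & _ & lt_total & lt_wf & [e _] & _).
  destruct (surjection_of_equinumerous HX) as [gX HgX].
  destruct (surjection_of_equinumerous HY) as [gY HgY].
  set (sched := fun a => match s a with inl t => inl (gX t) | inr t => inr (gY t) end).
  assert (Hsched : Surjective sched).
  { intros [x|y]; [destruct (HgX x) as [t <-]; destruct (Hs (inl t)) as [a Ha]
                  |destruct (HgY y) as [t <-]; destruct (Hs (inr t)) as [a Ha]];
    exists a; unfold sched; rewrite Ha; reflexivity. }
  assert (Hbfs_cond : (exists Pi, is_bfs RX RY Pi /\ kappa_closed lt Pi) -> condenses RX RY).
  { intros [Pi [Hbfs Hclosed]]. exact (closed_bfs_condenses lt_wf Hbfs Hclosed (e 0) lt_total HgX HgY). }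
  split; split; intro H.
  - exact (condenses_closed_bfs lt H).
  - exact (Hbfs_cond H).
  - exact (condenses_winning lt (Hbfs_cond H)).
  - exact (condenses_closed_bfs lt (winning_condenses lt_wf Hsched H)).
Qed.

End Condensations.

Theorem theorem3p1 (I : Type) (ar : I -> nat) (X Y K : Type)
  (RX : structure_rel ar X) (RY : structure_rel ar Y) (lt : K -> K -> Prop) :
  is_infinite_cardinal lt -> equinumerous X K -> equinumerous Y K ->
  (* (I) *)
  ((condenses RX RY <->
      exists Pi, is_bfs RX RY Pi /\ kappa_closed lt Pi) /\
   ((exists Pi, is_bfs RX RY Pi /\ kappa_closed lt Pi) <->
      II_has_winning_strategy lt RX RY)) /\
  (* (II) *)
  ((cond_equiv RX RY <->
      (exists PiXY, is_bfs RX RY PiXY /\ kappa_closed lt PiXY) /\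
      (exists PiYX, is_bfs RY RX PiYX /\ kappa_closed lt PiYX)) /\
   ((exists PiXY, is_bfs RX RY PiXY /\ kappa_closed lt PiXY) /\
    (exists PiYX, is_bfs RY RX PiYX /\ kappa_closed lt PiYX) <->
      II_has_winning_strategy lt RX RY /\ II_has_winning_strategy lt RY RX)).
Proof.
  intros HK HX HY.
  destruct (condenses_iff_closed_bfs_iff_winning RX RY HK HX HY) as [HXY_cond HXY_game].
  destruct (condenses_iff_closed_bfs_iff_winning RY RX HK HY HX) as [HYX_cond HYX_game].
  unfold cond_equiv. tauto.
Qed.
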